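(* Let $X$ be a complex manifold of dimension $n\ge2$, $f$ a holomorphic function with $Z=f^{-1}(0)$ having an isolated singularity at $0$ ($\mathrm{Sing}\,Z=\{0\}$). Let $E_f=\mathrm{Hom}_{\mathcal D_X}(M'_f,B)$ (at the stalk at $0$), and let $-\beta_f$ be the minimal root of the $b$-function of $f$ at $0$. Then for every integer $k>\beta_f-1$, the map $\phi_k:E_f\to B$, $u\mapsto u(f^{-k})$, is injective.
   Context: $M'_f=\mathcal O_X[f^{-1}]$ as a $\mathcal D_X$-module. $B=H^n_{[0]}\mathcal O_X$ is the algebraic local cohomology, identified via Čech cohomology with $\mathbb C[x_1^{-1},\dots,x_n^{-1}]\,(x_1\cdots x_n)^{-1}$ in local coordinates; it is the unique simple regular holonomic $\mathcal D_X$-module supported on $\{0\}$. The $b$-function is the Bernstein–Sato polynomial $b_f(s)$ of $f$ at $0$. *)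

(* Germs of holomorphic functions at 0 in C^n are modelled
   as convergent power series with coefficients in C := R[i] (R : realType). *)
From HB Require Import structures.
From mathcomp Require Import all_boot all_order all_algebra.
From mathcomp Require Import reals.
From mathcomp Require Import complex.
Set Implicit Arguments. Unset Strict Implicit. Unset Printing Implicit Defensive.
Import Order.TTheory GRing.Theory Num.Theory.
Local Open Scope ring_scope.
Local Open Scope complex_scope.

Section Defs.
Variables (R : realType) (n : nat).
Local Notation C := R[i].

Definition mi := 'I_n -> nat.
Definition series := mi -> C.
Definition mdeg (a : mi) : nat := (\sum_i a i)%N.
Definition maddm (a b : mi) : mi := fun i => (a i + b i)%N.
Definition msubm (a b : mi) : mi := fun i => (a i - b i)%N.
Definition munit (i : 'I_n) : mi := fun j => nat_of_bool (j == i).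
Definition mzero : mi := fun _ => 0%N.
Definition ofbox N (t : {ffun 'I_n -> 'I_N}) : mi := fun i => nat_of_ord (t i).

Definition sum_le (g : mi) (F : mi -> C) : C :=
  \sum_(t : {ffun 'I_n -> 'I_(mdeg g).+1} | [forall i, (t i <= g i)%N]) F (ofbox t).
Definition sum_box (N : nat) (F : mi -> C) : C :=
  \sum_(t : {ffun 'I_n -> 'I_N.+1}) F (ofbox t).

Definition convergent (a : series) : Prop :=
  exists c r : R, 0 < r /\ forall al, `|a al| <= (c * r ^+ mdeg al)%:C.

Definition szero : series := fun _ => 0.
Definition sconst (c : C) : series := fun al => if mdeg al == 0%N then c else 0.
Definition sone : series := sconst 1.
Definition sadd (a b : series) : series := fun al => a al + b al.
Definition sscale (c : C) (a : series) : series := fun al => c * a al.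
Definition smul (a b : series) : series :=
  fun g => sum_le g (fun al => a al * b (msubm g al)).
Definition spow (a : series) (k : nat) : series := iter k (smul a) sone.
Definition sderiv (i : 'I_n) (a : series) : series :=
  fun al => (al i).+1%:R * a (maddm al (munit i)).

Definition psum (a : series) (x : 'I_n -> C) (K : nat) : C :=
  \sum_(t : {ffun 'I_n -> 'I_K.+1} | (mdeg (ofbox t) <= K)%N)
     a (ofbox t) * \prod_i x i ^+ t i.
Definition has_value (a : series) (x : 'I_n -> C) (L : C) : Prop :=
  forall eps : R, 0 < eps -> exists K0, forall K, (K0 <= K)%N ->
    `|psum a x K - L| < eps%:C.

(* Sing Z = {0} for Z = f^{-1}(0): 0 is a critical point of f on Z, and
   near 0 there is no other point of Z where df vanishes *)
Definition isolated_sing (f : series) : Prop :=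
  f mzero = 0 /\ (forall i, sderiv i f mzero = 0) /\
  exists rho : R, 0 < rho /\
    forall x : 'I_n -> C, (forall i, `|x i| < rho%:C) ->
      has_value f x 0 -> (forall i, has_value (sderiv i f) x 0) ->
      x = (fun _ => 0).

Variable f : series.

(* ---- M'_f = O[f^{-1}] : element g / f^k represented by (g, k) ---- *)
Definition loc := (series * nat)%type.
Definition loc_valid (x : loc) : Prop := convergent x.1.
Definition loc_eq (x y : loc) : Prop :=
  smul x.1 (spow f y.2) = smul y.1 (spow f x.2).
Definition loc_add (x y : loc) : loc :=
  (sadd (smul x.1 (spow f y.2)) (smul y.1 (spow f x.2)), (x.2 + y.2)%N).
Definition loc_act (h : series) (x : loc) : loc := (smul h x.1, x.2).
(* d_i (g / f^k) = (f d_i g - k g d_i f) / f^(k+1) *)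
Definition loc_der (i : 'I_n) (x : loc) : loc :=
  (sadd (smul f (sderiv i x.1)) (sscale (- x.2%:R) (smul (sderiv i f) x.1)),
   x.2.+1).
Definition fpow_rep (k : int) : loc :=
  match k with
  | Posz m => (sone, m)
  | Negz m => (spow f m.+1, 0%N)
  end.

(* ---- B = H^n_[0] O_X = C[x^{-1}] (x_1...x_n)^{-1}:
   b : mi -> C finitely supported, b al = coefficient of x^{-(al+1)} ---- *)
Definition bmod := mi -> C.
Definition finsupp (N : nat) (b : bmod) : Prop :=
  forall al, (N < mdeg al)%N -> b al = 0.
Definition badd (b c : bmod) : bmod := fun al => b al + c al.
(* action of h in O (valid whenever N bounds the support of b) *)
Definition B_act (N : nat) (h : series) (b : bmod) : bmod :=
  fun g => sum_box N (fun al => h al * b (maddm g al)).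
(* d_i x^{-(al+1)} = -(al_i+1) x^{-(al+1+e_i)} *)
Definition B_der (i : 'I_n) (b : bmod) : bmod :=
  fun g => if (0 < g i)%N then - (g i)%:R * b (fun j => (g j - (j == i))%N)
           else 0.

(* E_f = Hom_{D_{X,0}}(M'_f, B); D_{X,0} is generated by O_{X,0} and the d_i.
   u is given on representatives and must be compatible with equivalence. *)
Definition is_Ehom (u : loc -> bmod) : Prop :=
  [/\ (forall x, loc_valid x -> exists N, finsupp N (u x)),
      (forall x y, loc_valid x -> loc_valid y -> loc_eq x y -> u x = u y),
      (forall x y, loc_valid x -> loc_valid y ->
          u (loc_add x y) = badd (u x) (u y)),
      (forall h x N, convergent h -> loc_valid x -> finsupp N (u x) ->
          u (loc_act h x) = B_act N h (u x)) &
      (forall i x, loc_valid x -> u (loc_der i x) = B_der i (u x))].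

Definition phi (k : int) (u : loc -> bmod) : bmod := u (fpow_rep k).

(* ---- O[f^{-1}, s] f^s : element (sum_j s^j P_j) f^{-k} f^s rep. by (P, k) ---- *)
Definition nrep := ((nat -> series) * nat)%type.
Definition N_valid (x : nrep) : Prop :=
  (exists J, forall j, (J < j)%N -> x.1 j = szero) /\
  (forall j, convergent (x.1 j)).
Definition N_eq (x y : nrep) : Prop :=
  forall j, smul (x.1 j) (spow f y.2) = smul (y.1 j) (spow f x.2).
Definition N_add (x y : nrep) : nrep :=
  (fun j => sadd (smul (x.1 j) (spow f y.2)) (smul (y.1 j) (spow f x.2)),
   (x.2 + y.2)%N).
Definition N_act (h : series) (x : nrep) : nrep := (fun j => smul h (x.1 j), x.2).
Definition N_s (x : nrep) : nrep :=
  (fun j => if j is j'.+1 then x.1 j' else szero, x.2).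
(* d_i (Q f^{s-k}) = (f d_i Q + (s - k) (d_i f) Q) f^{s-k-1} *)
Definition N_der (i : 'I_n) (x : nrep) : nrep :=
  (fun j => sadd (sadd (smul f (sderiv i (x.1 j)))
                       (sscale (- x.2%:R) (smul (sderiv i f) (x.1 j))))
                 (if j is j'.+1 then smul (sderiv i f) (x.1 j') else szero),
   x.2.+1).

Inductive in_Ds_fs1 : nrep -> Prop :=
| Ds_gen : in_Ds_fs1 (fun j => if j == 0%N then f else szero, 0%N)
| Ds_add x y : in_Ds_fs1 x -> in_Ds_fs1 y -> in_Ds_fs1 (N_add x y)
| Ds_act h x : convergent h -> in_Ds_fs1 x -> in_Ds_fs1 (N_act h x)
| Ds_s x : in_Ds_fs1 x -> in_Ds_fs1 (N_s x)
| Ds_der i x : in_Ds_fs1 x -> in_Ds_fs1 (N_der i x)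
| Ds_eq x y : in_Ds_fs1 x -> N_valid y -> N_eq x y -> in_Ds_fs1 y.

Definition bfs (b : {poly C}) : nrep := (fun j => sconst b`_j, 0%N).

Definition is_bfunction (b : {poly C}) : Prop :=
  [/\ b \is monic, in_Ds_fs1 (bfs b) &
      forall b' : {poly C}, in_Ds_fs1 (bfs b') -> b %| b'].

End Defs.

(* Substituting s := -m is a D-linear map O[1/f, s] f^s -> O[1/f] sending
   f^(s+1) to f^(1-m) and b(s) f^s to b(-m) f^(-m).  As b(s) f^s lies in
   D[s] f^(s+1), two D-linear maps u, v : O[1/f] -> B that agree on f^(1-m)
   agree on b(-m) f^(-m), hence on f^(-m) when b(-m) <> 0.  The hypothesis
   k > beta_f - 1 gives b(-m) <> 0 for all m > k, so agreement on
   f^(-k) propagates to every f^(-m), and O[1/f] is the union of the O f^(-m).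
   For k < 0 the induction starts from f^0 = 1, which every such map kills. *)

From HB Require Import structures.
From mathcomp Require Import all_boot all_order all_algebra.
From mathcomp Require Import reals complex boolp.
From mathcomp Require Import ring zify.
Set Implicit Arguments. Unset Strict Implicit. Unset Printing Implicit Defensive.
Import Order.TTheory GRing.Theory Num.Theory.
Local Open Scope ring_scope.

Section MultiIndex.
Variable n : nat.
Implicit Types (al g : mi n).

Definition mle al g := [forall i, (al i <= g i)%N].

Lemma mleP al g : reflect (forall i, al i <= g i)%N (mle al g).
Proof. exact: forallP. Qed.

Lemma mdeg_ge al i : (al i <= mdeg al)%N.
Proof. by rewrite /mdeg (bigD1 i) //= leq_addr. Qed.

Lemma mdeg_eq0 al : (mdeg al == 0)%N = (al == @mzero n).
Proof.
rewrite /mdeg sum_nat_eq0; apply/forallP/eqP => [al0|-> //].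
by apply: funext => i; apply/eqP; apply: (implyP (al0 i)).
Qed.

Lemma mdeg_mzero : mdeg (@mzero n) = 0%N.
Proof. by apply/eqP; rewrite mdeg_eq0. Qed.

Lemma mdeg_maddm_munit al i : mdeg (maddm al (munit i)) = (mdeg al).+1.
Proof.
have unit1 : (\sum_j munit i j = 1)%N.
  by rewrite (bigD1 i) //= /munit eqxx big1 // => j /negbTE ->.
by rewrite /mdeg /maddm big_split /= unit1 addn1.
Qed.

Lemma mdeg_msubm al g : mle al g -> (mdeg al + mdeg (msubm g al))%N = mdeg g.
Proof.
move/mleP => le_al_g; rewrite /mdeg -big_split /=; apply: eq_bigr => i _.
by rewrite /msubm; have := le_al_g i; lia.
Qed.

Lemma mle_mdeg al g : mle al g -> (mdeg al <= mdeg g)%N.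
Proof. by move/mdeg_msubm <-; apply: leq_addr. Qed.

Lemma mdeg_msubm_le g al : (mdeg (msubm g al) <= mdeg g)%N.
Proof. by apply: leq_sum => i _; apply: leq_subr. Qed.

Lemma mle_lt_box al g N : mle al g -> (mdeg g <= N)%N -> forall i, (al i < N.+1)%N.
Proof. by move=> /mleP le_al_g leN i; have := le_al_g i; have := mdeg_ge g i; lia. Qed.

Definition box_of N al : {ffun 'I_n -> 'I_N.+1} := [ffun i => inord (al i)].

Lemma box_ofK N al : (forall i, al i < N.+1)%N -> ofbox (box_of N al) = al.
Proof. by move=> al_lt; apply: funext => i; rewrite /ofbox ffunE inordK. Qed.

Lemma ofbox_inj N : injective (@ofbox n N).
Proof.
by move=> t t' tt'; apply/ffunP => i; apply: val_inj; exact: (congr1 (fun g => g i) tt').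
Qed.

Lemma count_mle_box D g : (forall i, g i < D)%N ->
  (\sum_(t : {ffun 'I_n -> 'I_D} | mle (ofbox t) g) 1 <= 2 ^ mdeg g)%N.
Proof.
move=> g_lt; rewrite big_mkcond /=.
under eq_bigr => t _.
  have -> : ((if mle (ofbox t) g then 1 else 0) = \prod_i nat_of_bool (t i <= g i))%N.
    case: (mleP _ g) => [le_t_g|].
      by rewrite big1 // => i _; rewrite le_t_g.
    move/forallP; rewrite negb_forall => /existsP [i Hi].
    by rewrite (bigD1 i) //= (negbTE Hi) mul0n.
over.
rewrite -(bigA_distr_bigA (fun i (j : 'I_D) => nat_of_bool (j <= g i)%N)) /=.
rewrite /mdeg expn_sum; apply: leq_prod => i _.
have -> : (\sum_(j < D) nat_of_bool (j <= g i) = (g i).+1)%N.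
  rewrite -big_mkcond /= (eq_bigl (fun j : 'I_D => j < (g i).+1)%N) //.
  by rewrite -(big_ord_widen _ (fun _ => 1%N)) ?g_lt // sum_nat_const card_ord muln1.
exact: ltn_expl.
Qed.

Section BoxSum.
Variable V : nmodType.

Definition box_sum N (P : pred (mi n)) (F : mi n -> V) : V :=
  \sum_(t : {ffun 'I_n -> 'I_N} | P (ofbox t)) F (ofbox t).

Lemma box_sum_reindex M M' (P Q : pred (mi n)) (F : mi n -> V) (s t : mi n -> mi n) :
  (forall al, P al -> forall i, al i < M.+1)%N ->
  (forall ga, Q ga -> forall i, ga i < M'.+1)%N ->
  (forall al, P al -> Q (s al) /\ t (s al) = al) ->
  (forall ga, Q ga -> P (t ga) /\ s (t ga) = ga) ->
  box_sum M'.+1 Q F = box_sum M.+1 P (F \o s).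
Proof.
move=> boxP boxQ sP tQ; rewrite /box_sum.
rewrite (reindex_onto (fun j => box_of M' (s (ofbox j)))
                      (fun j => box_of M (t (ofbox j)))); last first.
  move=> j Qj; have [Pt st] := tQ _ Qj.
  by apply: ofbox_inj; rewrite (box_ofK (al := t _)) ?st ?box_ofK //; [apply: boxQ|apply: boxP].
have domE j : Q (ofbox (box_of M' (s (ofbox j)))) &&
              (box_of M (t (ofbox (box_of M' (s (ofbox j))))) == j) = P (ofbox j).
  apply/idP/idP => [/andP[Qj /eqP <-]|Pj].
    by have [Pt _] := tQ _ Qj; rewrite box_ofK //; apply: boxP.
  have [Qs ts] := sP _ Pj; rewrite box_ofK ?Qs /=; last exact: boxQ.
  by apply/eqP/ofbox_inj; rewrite box_ofK ts //; apply: boxP.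
rewrite (eq_bigl _ _ domE); apply: eq_bigr => j Pj.
by have [Qs _] := sP _ Pj; rewrite box_ofK //; apply: boxQ.
Qed.

End BoxSum.
End MultiIndex.

Section SeriesRing.
Variables (R : realType) (n : nat).
Local Notation C := R[i].
Local Notation mi := (mi n).
Local Notation series := (series R n).
Local Notation mzero := (@mzero n).
Local Notation szero := (@szero R n).
Implicit Types (a b c : series) (g : mi) (k : C).

Lemma sum_le_box g N (F : mi -> C) :
  (mdeg g <= N)%N -> sum_le g F = box_sum N.+1 (fun al => mle al g) F.
Proof.
move=> leN; rewrite /sum_le -/(box_sum _ (fun al => mle al g) F).
by apply: (@box_sum_reindex _ _ N (mdeg g) _ _ F id id) => // al /mle_lt_box; apply.
Qed.

Lemma sconst_mzero k : @sconst R n k mzero = k.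
Proof. by rewrite /sconst mdeg_mzero. Qed.

Lemma sconst_neq_mzero k g : g != mzero -> @sconst R n k g = 0.
Proof. by rewrite /sconst mdeg_eq0 => /negbTE ->. Qed.

Lemma smul_sconst k a : smul (sconst k) a = sscale k a.
Proof.
apply: funext => g; rewrite /smul (sum_le_box _ (leqnn _)) /box_sum.
have box0 : forall i, (mzero i < (mdeg g).+1)%N by [].
rewrite (bigD1 (box_of (mdeg g) mzero)) /=; last by rewrite box_ofK //; apply/mleP.
rewrite box_ofK // sconst_mzero big1 ?addr0 => [|t /andP[_ t_neq0]].
  by congr (_ * a _); apply: funext => i; rewrite /msubm subn0.
rewrite sconst_neq_mzero ?mul0r //; apply: contra t_neq0 => /eqP t0.
by apply/eqP/ofbox_inj; rewrite t0 box_ofK.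
Qed.

Lemma sscale_sconst k k' : sscale k (sconst k') = sconst (k * k') :> series.
Proof. by apply: funext => g; rewrite /sscale /sconst; case: ifP; rewrite ?mulr0. Qed.

Lemma smul1 : left_id (@sone R n) (@smul R n).
Proof. by move=> a; rewrite smul_sconst; apply: funext => g; rewrite /sscale mul1r. Qed.

Lemma smulC : commutative (@smul R n).
Proof.
move=> a b; apply: funext => g; rewrite /smul !(sum_le_box _ (leqnn _)).
have sub_le al : mle al g -> mle (msubm g al) g.
  by move=> _; apply/mleP => i; apply: leq_subr.
have subK al : mle al g -> msubm g (msubm g al) = al.
  by move/mleP=> le_al_g; apply: funext => i; rewrite /msubm; have := le_al_g i; lia.
rewrite (@box_sum_reindex _ _ (mdeg g) (mdeg g) (fun al => mle al g) (fun al => mle al g)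
            _ (msubm g) (msubm g)).
- by rewrite /box_sum; apply: eq_bigr => t /= le_t_g; rewrite subK // mulrC.
- by move=> al /mle_lt_box; apply.
- by move=> al /mle_lt_box; apply.
- by move=> al le_al_g; rewrite sub_le ?subK.
- by move=> al le_al_g; rewrite sub_le ?subK.
Qed.

Lemma smulA a b c : smul (smul a b) c = smul a (smul b c).
Proof.
apply: funext => g; rewrite /smul (sum_le_box _ (leqnn _)) /box_sum.
set D := mdeg g.
under eq_bigr => t le_t_g.
  rewrite (@sum_le_box (ofbox t) D _ (mle_mdeg le_t_g)) /box_sum mulr_suml.
over.
rewrite /= (exchange_big_dep (fun t => mle (ofbox t) g)) /=; last first.
  move=> t t' /mleP le_t_g /mleP le_t'_t; apply/mleP => i.
  exact: leq_trans (le_t'_t i) (le_t_g i).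
rewrite (sum_le_box _ (leqnn _)) /box_sum; apply: eq_bigr => t /mleP le_t_g.
rewrite (@sum_le_box _ D _ (mdeg_msubm_le g (ofbox t))) /box_sum mulr_sumr.
symmetry; pose P al := mle al g && mle (ofbox t) al.
have := @box_sum_reindex _ _ D D P (fun al => mle al (msubm g (ofbox t)))
   (fun al => a (ofbox t) * (b al * c (msubm (msubm g (ofbox t)) al)))
   (fun al => msubm al (ofbox t)) (fun al => maddm al (ofbox t)).
rewrite /box_sum => ->.
- apply: eq_bigr => t' /andP[/mleP le_t'_g /mleP le_t_t'] /=; rewrite mulrA.
  congr (_ * c _); apply: funext => i; rewrite /msubm.
  by have := le_t'_g i; have := le_t_t' i; lia.
- by move=> al /andP[/mle_lt_box + _]; apply.
- by move=> al /mle_lt_box; apply; apply: mdeg_msubm_le.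
- move=> al /andP[/mleP le_al_g /mleP le_t_al]; split.
    by apply/mleP => i; rewrite /msubm; have := le_al_g i; have := le_t_al i; lia.
  by apply: funext => i; rewrite /msubm /maddm; have := le_t_al i; lia.
- move=> al /mleP le_al; split; last by apply: funext => i; rewrite /msubm /maddm; lia.
  apply/andP; split; apply/mleP => i; rewrite /maddm;
    have := le_al i; have := le_t_g i; rewrite /msubm; lia.
Qed.

Definition ps := series.
HB.instance Definition _ := Choice.on ps.

Definition sopp a : series := fun al => - a al.

Lemma saddA : associative (@sadd R n).
Proof. by move=> a b c; apply: funext => g; rewrite /sadd addrA. Qed.
Lemma saddC : commutative (@sadd R n).
Proof. by move=> a b; apply: funext => g; rewrite /sadd addrC. Qed.
Lemma sadd0 : left_id szero (@sadd R n).
Proof. by move=> a; apply: funext => g; rewrite /sadd /szero add0r. Qed.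
Lemma saddN : left_inverse szero sopp (@sadd R n).
Proof. by move=> a; apply: funext => g; rewrite /sadd /szero /sopp addNr. Qed.

HB.instance Definition _ := GRing.isZmodule.Build ps saddA saddC sadd0 saddN.

Lemma smulDl : left_distributive (@smul R n) (@sadd R n).
Proof.
move=> a b c; apply: funext => g; rewrite /smul /sadd /sum_le -big_split /=.
by apply: eq_bigr => t _; rewrite mulrDl.
Qed.

Lemma sone_neq0 : (@sone R n : ps) != (szero : ps).
Proof.
apply/eqP => /(congr1 (fun a => a mzero)) /=.
by rewrite /sone sconst_mzero => /eqP; rewrite oner_eq0.
Qed.

HB.instance Definition _ := GRing.Zmodule_isComNzRing.Build ps
  (fun a b c => esym (smulA a b c)) smulC smul1 smulDl sone_neq0.

Lemma smulE a b : smul a b = (a : ps) * (b : ps). Proof. by []. Qed.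
Lemma saddE a b : sadd a b = (a : ps) + (b : ps). Proof. by []. Qed.
Lemma soneE : @sone R n = (1 : ps). Proof. by []. Qed.
Lemma szeroE : szero = (0 : ps). Proof. by []. Qed.

Lemma spowE a m : spow a m = (a : ps) ^+ m.
Proof. by elim: m => [|m IH] //=; rewrite exprS -IH. Qed.

Lemma smul_s0 a : smul a szero = szero.
Proof. by rewrite smulE szeroE mulr0. Qed.

Lemma sadd_s0 a : sadd a szero = a.
Proof. by rewrite saddE szeroE addr0. Qed.

Lemma sscale_s0 k : sscale k szero = szero.
Proof. by apply: funext => al; rewrite /sscale /szero mulr0. Qed.

Lemma sderiv_s0 i : sderiv i szero = szero.
Proof. by apply: funext => al; rewrite /sderiv /szero mulr0. Qed.

Lemma sderiv_sconst i k : sderiv i (@sconst R n k) = szero.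
Proof. by apply: funext => al; rewrite /sderiv /sconst mdeg_maddm_munit /szero mulr0. Qed.

End SeriesRing.

Section Convergence.
Local Open Scope complex_scope.
Variables (R : realType) (n : nat).
Local Notation C := R[i].
Local Notation series := (series R n).
Implicit Types (a b : series) (k : C).

Definition coef_bound a (c r : R) := forall al, `|a al| <= (c * r ^+ mdeg al)%:C.

Lemma coef_bound_ge0 a c r : coef_bound a c r -> 0 <= c.
Proof.
by move/(_ (@mzero n)); rewrite mdeg_mzero expr0 mulr1 -ler0c; apply: le_trans.
Qed.

Lemma coef_bound_radius a c r r' : 0 < r -> r <= r' -> coef_bound a c r -> coef_bound a c r'.
Proof.
move=> r0 le_rr' bnd_a al; apply: le_trans (bnd_a al) _; rewrite lecR.
apply: ler_wpM2l; first exact: coef_bound_ge0 bnd_a.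
by rewrite lerXn2r // qualifE /= ?ltW // (lt_le_trans r0).
Qed.

Lemma convergent_common_radius a b : convergent a -> convergent b ->
  exists c1 c2 r, [/\ 0 < r, coef_bound a c1 r & coef_bound b c2 r].
Proof.
move=> [c1 [r1 [r1_gt0 bnd_a]]] [c2 [r2 [r2_gt0 bnd_b]]].
exists c1, c2, (Num.max r1 r2); split; first by rewrite lt_max r1_gt0.
  by apply: coef_bound_radius bnd_a; rewrite ?le_max ?lexx.
by apply: coef_bound_radius bnd_b; rewrite ?le_max ?lexx ?orbT.
Qed.

Lemma normc_real k : exists2 K : R, 0 <= K & `|k| = K%:C.
Proof.
rewrite normc_def; exists (Num.sqrt (complex.Re k ^+ 2 + complex.Im k ^+ 2)) => //.
exact: sqrtr_ge0.
Qed.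

Lemma convergent_sadd a b : convergent a -> convergent b -> convergent (sadd a b).
Proof.
move=> ca cb; have [c1 [c2 [r [r_gt0 bnd_a bnd_b]]]] := convergent_common_radius ca cb.
exists (c1 + c2), r; split => // al; apply: le_trans (ler_normD _ _) _.
by rewrite mulrDl rmorphD /=; apply: lerD.
Qed.

Lemma convergent_sscale k a : convergent a -> convergent (sscale k a).
Proof.
move=> [c [r [r_gt0 bnd_a]]]; have [K K_ge0 normk] := normc_real k.
exists (K * c), r; split => // al; rewrite /sscale normrM normk -mulrA rmorphM /=.
by apply: ler_wpM2l; rewrite ?ler0c.
Qed.

Lemma convergent_sconst k : convergent (@sconst R n k).
Proof.
have [K K_ge0 normk] := normc_real k.
exists K, 1; split => // al; rewrite expr1n mulr1 /sconst.
by case: eqP => _; rewrite ?normk // normr0 ler0c.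
Qed.

Lemma convergent_szero : convergent (@szero R n).
Proof. by exists 0, 1; split => // al; rewrite /szero normr0 mul0r. Qed.

(* There are at most 2^|g| multi-indices below g, so the product of two
   series bounded with radius r is bounded with radius 2r. *)
Lemma convergent_smul a b : convergent a -> convergent b -> convergent (smul a b).
Proof.
move=> ca cb; have [c1 [c2 [r [r_gt0 bnd_a bnd_b]]]] := convergent_common_radius ca cb.
have [c1_ge0 c2_ge0] := (coef_bound_ge0 bnd_a, coef_bound_ge0 bnd_b).
exists (c1 * c2), (2 * r); split => [|g]; first by rewrite mulr_gt0.
rewrite /smul (sum_le_box _ (leqnn _)) /box_sum.
apply: le_trans (ler_norm_sum _ _ _) _.
pose K := (c1 * c2 * r ^+ mdeg g)%:C.
apply: (@le_trans _ _ (\sum_(t : {ffun 'I_n -> 'I_(mdeg g).+1} | mle (ofbox t) g) K)).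
  apply: ler_sum => t le_t_g; rewrite normrM.
  apply: le_trans (ler_pM _ _ (bnd_a _) (bnd_b _)) _; rewrite ?normr_ge0 //.
  by rewrite -rmorphM /= mulrACA -exprD mdeg_msubm.
rewrite -(eq_bigr _ (fun t _ => mul1r K)) -mulr_suml (eq_bigr (fun _ => 1%N%:R)) //.
rewrite -natr_sum /K -(rmorph_nat (real_complex R)) -rmorphM /= lecR.
rewrite [X in _ <= X](_ : _ = 2 ^+ mdeg g * (c1 * c2 * r ^+ mdeg g)); last first.
  by rewrite exprMn; ring.
apply: ler_wpM2r; first by rewrite !mulr_ge0 // exprn_ge0 // ltW.
rewrite -natrX ler_nat.
by apply: count_mle_box => i; rewrite ltnS mdeg_ge.
Qed.

Lemma convergent_sderiv i a : convergent a -> convergent (sderiv i a).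
Proof.
move=> [c [r [r_gt0 bnd_a]]]; have c_ge0 := coef_bound_ge0 bnd_a.
exists (c * r), (2 * r); split => [|al]; first by rewrite mulr_gt0.
rewrite /sderiv normrM normr_nat.
apply: le_trans (ler_wpM2l _ (bnd_a _)) _; first by rewrite ler0n.
rewrite mdeg_maddm_munit -(rmorph_nat (real_complex R)) -rmorphM /= lecR.
rewrite [X in X <= _](_ : _ = c * r * r ^+ mdeg al * (al i).+1%:R); last first.
  by rewrite exprS; ring.
rewrite [X in _ <= X](_ : _ = c * r * r ^+ mdeg al * 2 ^+ mdeg al); last first.
  by rewrite exprMn; ring.
apply: ler_wpM2l; first by rewrite !mulr_ge0 // ?exprn_ge0 // ltW.
rewrite -natrX ler_nat; apply: leq_trans (ltn_expl (al i) (isT : (1 < 2)%N)) _.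
by rewrite leq_exp2l // mdeg_ge.
Qed.

Lemma convergent_spow a m : convergent a -> convergent (spow a m).
Proof.
by move=> ca; elim: m => [|m IH] /=; [exact: convergent_sconst | exact: convergent_smul].
Qed.

End Convergence.

Section EvaluationInS.
Variables (R : realType) (n : nat).
Local Notation C := R[i].
Local Notation series := (series R n).
Local Notation szero := (@szero R n).
Implicit Types (a q : series) (c k : C) (P Q : nat -> series).

Definition seval J c P : series := fun al => \sum_(j < J) c ^+ j * P j al.

Lemma convergent_seval J c P : (forall j, convergent (P j)) -> convergent (seval J c P).
Proof.
move=> cP; elim: J => [|J IH].
  rewrite (_ : seval _ _ _ = szero); first exact: convergent_szero.
  by apply: funext => al; rewrite /seval big_ord0.
rewrite (_ : seval _ _ _ = sadd (seval J c P) (sscale (c ^+ J) (P J))).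
  by apply: convergent_sadd => //; apply: convergent_sscale.
by apply: funext => al; rewrite /seval /sadd /sscale big_ord_recr.
Qed.

Lemma seval_widen J J' c P : (forall j, (J <= j)%N -> P j = szero) -> (J <= J')%N ->
  seval J' c P = seval J c P.
Proof.
move=> P_eq0 le_JJ'; apply: funext => al; rewrite /seval.
rewrite [RHS](big_ord_widen J' (fun j => c ^+ j * P j al)) // [RHS]big_mkcond /=.
apply: eq_bigr => j _; case: ifP => // /negbT; rewrite -leqNgt => /P_eq0 ->.
by rewrite /szero mulr0.
Qed.

Lemma smul_seval_l J c P q : smul (seval J c P) q = seval J c (fun j => smul (P j) q).
Proof.
apply: funext => g; rewrite /smul /seval /sum_le.
under eq_bigr do rewrite mulr_suml.
rewrite exchange_big /=; apply: eq_bigr => j _; rewrite mulr_sumr.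
by apply: eq_bigr => t _; rewrite mulrA.
Qed.

Lemma smul_seval_r J c P q : smul q (seval J c P) = seval J c (fun j => smul q (P j)).
Proof.
rewrite smulC smul_seval_l; apply: funext => g; rewrite /seval.
by apply: eq_bigr => j _; rewrite smulC.
Qed.

Lemma seval_sadd J c P Q :
  seval J c (fun j => sadd (P j) (Q j)) = sadd (seval J c P) (seval J c Q).
Proof.
apply: funext => g; rewrite /seval /sadd -big_split /=.
by apply: eq_bigr => j _; rewrite mulrDr.
Qed.

Lemma seval_sscale J c k P : seval J c (fun j => sscale k (P j)) = sscale k (seval J c P).
Proof.
by apply: funext => g; rewrite /seval /sscale mulr_sumr; apply: eq_bigr => j _; rewrite mulrCA.
Qed.

Lemma sderiv_seval i J c P : sderiv i (seval J c P) = seval J c (fun j => sderiv i (P j)).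
Proof.
by apply: funext => g; rewrite /sderiv /seval mulr_sumr; apply: eq_bigr => j _; rewrite mulrCA.
Qed.

Lemma seval_shift J c P :
  seval J.+1 c (fun j => if j is j'.+1 then P j' else szero) = sscale c (seval J c P).
Proof.
apply: funext => g; rewrite /seval /sscale big_ord_recl /= /szero mulr0 add0r mulr_sumr.
by apply: eq_bigr => j _; rewrite exprS /bump /= mulrA.
Qed.

End EvaluationInS.

Section Specialization.
Variables (R : realType) (n : nat) (f : series R n).
Hypothesis cf : convergent f.
Local Notation C := R[i].
Local Notation loc := (loc R n).
Local Notation nrep := (nrep R n).
Local Notation szero := (@szero R n).
Implicit Types (x y : nrep) (m J : nat).

(* [(P, k) : nrep] stands for P(s) f^(s-k); at s = -m it becomes P(-m) f^(-m-k). *)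
Definition spec_at m J x : loc := (seval J (- m%:R) x.1, (m + x.2)%N).

Definition sdeg_lt J x := forall j, (J <= j)%N -> x.1 j = szero.

Lemma N_valid_sdeg_lt x : N_valid x -> exists J, sdeg_lt J x.
Proof. by case=> [[J x_eq0] _]; exists J.+1 => j /x_eq0. Qed.

Lemma sdeg_lt_widen J J' x : sdeg_lt J x -> (J <= J')%N -> sdeg_lt J' x.
Proof. by move=> x_eq0 le_JJ' j le_J'j; apply/x_eq0/(leq_trans le_JJ'). Qed.

Lemma spec_at_widen m J J' x : sdeg_lt J x -> (J <= J')%N -> spec_at m J' x = spec_at m J x.
Proof. by move=> x_eq0 le_JJ'; rewrite /spec_at (seval_widen _ x_eq0 le_JJ'). Qed.

Lemma loc_valid_spec_at m J x : N_valid x -> loc_valid (spec_at m J x).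
Proof. by case=> _ cx; apply: convergent_seval. Qed.

Lemma loc_valid_add (a b : loc) : loc_valid a -> loc_valid b -> loc_valid (loc_add f a b).
Proof.
by move=> ca cb; apply: convergent_sadd; apply: convergent_smul => //; apply: convergent_spow.
Qed.

Lemma loc_valid_act h (a : loc) : convergent h -> loc_valid a -> loc_valid (loc_act h a).
Proof. exact: convergent_smul. Qed.

Lemma Ds_fs1_valid x : in_Ds_fs1 f x -> N_valid x.
Proof.
elim=> {x} [|x y _ [[Jx x_eq0] cx] _ [[Jy y_eq0] cy]|h x ch _ [[Jx x_eq0] cx]
            |x _ [[Jx x_eq0] cx]|i x _ [[Jx x_eq0] cx]|//]; split.
- by exists 0%N => -[].
- by case=> [|j]; [exact: cf | exact: convergent_szero].
- exists (maxn Jx Jy) => j /=; rewrite gtn_max => /andP[/x_eq0 -> /y_eq0 ->].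
  by rewrite !smulE saddE szeroE !mul0r addr0.
- by move=> j; apply: convergent_sadd; apply: convergent_smul => //; apply: convergent_spow.
- by exists Jx => j /x_eq0 /= ->; rewrite smul_s0.
- by move=> j; apply: convergent_smul.
- by exists Jx.+1 => -[|j] // /x_eq0.
- by case=> [|j]; [exact: convergent_szero | exact: cx].
- exists Jx.+1 => -[|j] //= lt_Jx_j.
  by rewrite !x_eq0 ?sderiv_s0 ?smul_s0 ?sscale_s0 ?sadd_s0 // ltnW.
- move=> j; apply: convergent_sadd; first apply: convergent_sadd.
  + by apply: convergent_smul => //; apply: convergent_sderiv.
  + by apply: convergent_sscale; apply: convergent_smul => //; apply: convergent_sderiv.
  + case: j => [|j]; first exact: convergent_szero.
    by apply: convergent_smul => //; apply: convergent_sderiv.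
Qed.

Lemma spec_at_gen m J : (0 < J)%N ->
  spec_at m J (fun j => if j == 0%N then f else szero, 0%N) = (f, m).
Proof.
case: J => // J _; rewrite /spec_at /= addn0; congr pair.
apply: funext => al; rewrite /seval big_ord_recl expr0 mul1r big1 ?addr0 // => j _.
by rewrite /szero mulr0.
Qed.

Lemma loc_eq_spec_at_add m J x y :
  loc_eq f (loc_add f (spec_at m J x) (spec_at m J y)) (spec_at m J (N_add f x y)).
Proof.
rewrite /loc_eq /spec_at /= seval_sadd -!smul_seval_l.
by rewrite !smulE !saddE !spowE !exprD; apply: (@id (_ = _ :> ps R n)); ring.
Qed.

Lemma spec_at_act m J h x : spec_at m J (N_act h x) = loc_act h (spec_at m J x).
Proof. by rewrite /spec_at /loc_act /= smul_seval_r. Qed.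

Lemma spec_at_s m J x : spec_at m J.+1 (N_s x) = loc_act (sconst (- m%:R)) (spec_at m J x).
Proof. by rewrite /spec_at /loc_act /= seval_shift smul_sconst. Qed.

Lemma spec_at_der m J i x : sdeg_lt J x ->
  spec_at m J.+1 (N_der f i x) = loc_der f i (spec_at m J x).
Proof.
move=> x_eq0; rewrite /spec_at /loc_der /= addnS; congr pair.
rewrite !seval_sadd seval_shift.
rewrite (@seval_widen _ _ J J.+1 _ (fun j => smul f _)) //; last first.
  by move=> j /x_eq0 ->; rewrite sderiv_s0 smul_s0.
rewrite (@seval_widen _ _ J J.+1 _ (fun j => sscale _ _)) //; last first.
  by move=> j /x_eq0 ->; rewrite smul_s0 sscale_s0.
rewrite seval_sscale -!smul_seval_r -sderiv_seval.
by apply: funext => al; rewrite /sadd /sscale natrD; ring.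
Qed.

Lemma loc_eq_spec_at m J x y : N_eq f x y -> loc_eq f (spec_at m J x) (spec_at m J y).
Proof.
move=> Exy; rewrite /loc_eq /spec_at /= !spowE !exprD !smulE mulrCA [RHS]mulrCA.
apply: (@id (_ = _ :> ps R n)); congr (_ * _); rewrite -!smulE -!spowE !smul_seval_l.
by congr seval; apply: funext => j; apply: Exy.
Qed.

Lemma sdeg_lt_bfs (b : {poly C}) : sdeg_lt (size b) (bfs n b).
Proof.
move=> j le_b_j; rewrite /bfs /= nth_default //.
by apply: funext => al; rewrite /sconst /szero; case: ifP.
Qed.

Lemma spec_at_bfs m (b : {poly C}) : spec_at m (size b) (bfs n b) = (sconst b.[- m%:R], m).
Proof.
rewrite /spec_at /= addn0; congr pair; apply: funext => al.
rewrite /seval /sconst horner_coef; case: ifP => _.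
  by apply: eq_bigr => j _; rewrite mulrC.
by rewrite big1 // => j _; rewrite mulr0.
Qed.

End Specialization.

Section Agreement.
Variables (R : realType) (n : nat) (f : series R n) (u v : loc R n -> bmod R n).
Hypotheses (cf : convergent f) (Eu : is_Ehom f u) (Ev : is_Ehom f v).
Local Notation C := R[i].
Local Notation loc := (loc R n).
Local Notation nrep := (nrep R n).
Local Notation sone := (@sone R n).
Implicit Types (a b : loc) (x y : nrep) (m J : nat).

Lemma agree_loc_eq a b : loc_valid a -> loc_valid b -> loc_eq f a b -> u a = v a -> u b = v b.
Proof.
move=> va vb Eab uv_a; case: Eu => _ u_compat _ _ _; case: Ev => _ v_compat _ _ _.
by rewrite -(u_compat a b) // -(v_compat a b).
Qed.

Lemma agree_loc_add a b : loc_valid a -> loc_valid b -> u a = v a -> u b = v b ->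
  u (loc_add f a b) = v (loc_add f a b).
Proof.
move=> va vb uv_a uv_b; case: Eu => _ _ u_add _ _; case: Ev => _ _ v_add _ _.
by rewrite u_add ?v_add ?uv_a ?uv_b.
Qed.

Lemma agree_loc_act h a : convergent h -> loc_valid a -> u a = v a ->
  u (loc_act h a) = v (loc_act h a).
Proof.
move=> ch va uv_a; case: Eu => u_fin _ _ u_act _; case: Ev => _ _ _ v_act _.
have [N u_finN] := u_fin a va.
by rewrite (u_act h a N) // (v_act h a N) -?uv_a.
Qed.

Lemma agree_loc_der i a : loc_valid a -> u a = v a -> u (loc_der f i a) = v (loc_der f i a).
Proof.
move=> va uv_a; case: Eu => _ _ _ _ u_der; case: Ev => _ _ _ _ v_der.
by rewrite u_der ?v_der ?uv_a.
Qed.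

Definition agree_spec m x := forall J, sdeg_lt J x -> u (spec_at m J x) = v (spec_at m J x).

Lemma agree_spec_large m x J0 :
  (forall J, (J0 <= J)%N -> u (spec_at m J x) = v (spec_at m J x)) -> agree_spec m x.
Proof.
move=> uv_large J x_eq0.
by rewrite -(spec_at_widen m x_eq0 (leq_maxl J J0)) uv_large ?leq_maxr.
Qed.

Lemma agree_spec_Ds_fs1 m x : u (f, m) = v (f, m) -> in_Ds_fs1 f x -> agree_spec m x.
Proof.
move=> uv_fm Dx; have valid J y : in_Ds_fs1 f y -> loc_valid (spec_at m J y).
  by move/(Ds_fs1_valid cf); apply: loc_valid_spec_at.
have deg_lt y : in_Ds_fs1 f y -> exists J, sdeg_lt J y.
  by move/(Ds_fs1_valid cf)/N_valid_sdeg_lt.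
elim: Dx => {x} [|x y Dx IHx Dy IHy|h x ch Dx IHx|x Dx IHx|i x Dx IHx|x y Dx IHx vy Exy].
- by apply: (@agree_spec_large _ _ 1) => J J_gt0; rewrite spec_at_gen.
- have [[Jx x_eq0] [Jy y_eq0]] := (deg_lt _ Dx, deg_lt _ Dy).
  apply: (@agree_spec_large _ _ (maxn Jx Jy)) => J; rewrite geq_max => /andP[leJx leJy].
  apply: (agree_loc_eq _ _ (loc_eq_spec_at_add _ _ _ _ _)); last apply: agree_loc_add.
  + by apply: (loc_valid_add cf); apply: valid.
  + exact/valid/Ds_add.
  + exact: valid.
  + exact: valid.
  + exact/IHx/(sdeg_lt_widen x_eq0).
  + exact/IHy/(sdeg_lt_widen y_eq0).
- have [Jx x_eq0] := deg_lt _ Dx.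
  apply: (@agree_spec_large _ _ Jx) => J leJx; rewrite spec_at_act.
  by apply: agree_loc_act; [|exact: valid|exact/IHx/(sdeg_lt_widen x_eq0)].
- have [Jx x_eq0] := deg_lt _ Dx.
  apply: (@agree_spec_large _ _ Jx.+1) => -[//|J] leJx; rewrite spec_at_s.
  apply: agree_loc_act; [exact: convergent_sconst|exact: valid|].
  exact/IHx/(sdeg_lt_widen x_eq0).
- have [Jx x_eq0] := deg_lt _ Dx.
  apply: (@agree_spec_large _ _ Jx.+1) => -[//|J] leJx.
  have x_eq0J := sdeg_lt_widen x_eq0 leJx.
  by rewrite spec_at_der //; apply: agree_loc_der; [exact: valid|exact: IHx].
- have [Jx x_eq0] := deg_lt _ Dx.
  apply: (@agree_spec_large _ _ Jx) => J leJx.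
  apply: (agree_loc_eq _ _ (loc_eq_spec_at _ _ Exy)); [exact: valid|exact: loc_valid_spec_at|].
  exact/IHx/(sdeg_lt_widen x_eq0).
Qed.

(* Specializing the functional equation b(s) f^s in D[s] f^(s+1) at s = -(m + 1). *)
Lemma agree_fpow_succ (b : {poly C}) m : in_Ds_fs1 f (bfs n b) ->
  b.[- m.+1%:R] != 0 -> u (sone, m) = v (sone, m) -> u (sone, m.+1) = v (sone, m.+1).
Proof.
move=> Dbf bm_neq0 uv_m.
have uv_f : u (f, m.+1) = v (f, m.+1).
  apply: (agree_loc_eq _ _ _ uv_m); [exact: convergent_sconst | exact: cf |].
  by rewrite /loc_eq /= smul1.
have := agree_spec_Ds_fs1 uv_f Dbf (@sdeg_lt_bfs _ _ b); rewrite spec_at_bfs => uv_b.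
have -> : (sone, m.+1) = loc_act (sconst b.[- m.+1%:R]^-1) (sconst b.[- m.+1%:R], m.+1).
  by rewrite /loc_act /= smul_sconst sscale_sconst mulVf.
by apply: agree_loc_act => //; apply: convergent_sconst.
Qed.

Lemma agree_fpow_all (b : {poly C}) K : in_Ds_fs1 f (bfs n b) ->
  (forall m, (K <= m)%N -> b.[- m.+1%:R] != 0) ->
  u (sone, K) = v (sone, K) -> forall m, u (sone, m) = v (sone, m).
Proof.
move=> Dbf b_neq0 uv_K m; case: (leqP K m) => [|/ltnW le_mK].
  elim: m => [|m IH]; first by rewrite leqn0 => /eqP <-.
  rewrite leq_eqVlt => /orP[/eqP <- //|lt_Km].
  exact: agree_fpow_succ Dbf (b_neq0 _ lt_Km) (IH lt_Km).
apply: (@agree_loc_eq (loc_act (spow f (K - m)) (sone, K))).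
- by apply: loc_valid_act; [apply: convergent_spow | apply: convergent_sconst].
- exact: convergent_sconst.
- by rewrite /loc_eq /loc_act /= !spowE !smulE soneE mulr1 mul1r -exprD subnK.
- by apply: agree_loc_act => //; [apply: convergent_spow | apply: convergent_sconst].
Qed.

Lemma agree_of_fpow : (forall m, u (sone, m) = v (sone, m)) ->
  forall a, loc_valid a -> u a = v a.
Proof.
move=> uv_fpow [g m] cg; apply: (@agree_loc_eq (loc_act g (sone, m))).
- by apply: loc_valid_act => //; apply: convergent_sconst.
- exact: cg.
- by rewrite /loc_eq /loc_act /= [smul g _]smulC smul1.
- by apply: agree_loc_act => //; apply: convergent_sconst.
Qed.

End Agreement.

Section EhomKillsOne.
Variables (R : realType) (n : nat) (f : series R n).
Local Notation sone := (@sone R n).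
Local Notation szero := (@szero R n).

Lemma B_der_eq0 i (b : bmod R n) : B_der i b = (fun _ => 0) -> b = (fun _ => 0).
Proof.
move=> db0; apply: funext => g; have := congr1 (fun c => c (maddm g (munit i))) db0.
rewrite /B_der /maddm /munit eqxx addn1 /=.
have -> : (fun j => (g j + (j == i) - (j == i))%N) = g by apply: funext => j; rewrite addnK.
by move/eqP; rewrite mulf_eq0 oppr_eq0 pnatr_eq0 /= => /eqP.
Qed.

(* B has no nonzero element killed by all the d_i, and d_i 1 = 0. *)
Lemma Ehom_one_eq0 w : (0 < n)%N -> is_Ehom f w -> w (sone, 0%N) = fun _ => 0.
Proof.
move=> n_gt0 [w_fin _ _ w_act w_der]; pose i := Ordinal n_gt0.
have one_valid m : loc_valid (sone, m) by apply: convergent_sconst.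
have d_one : loc_der f i (sone, 0%N) = loc_act szero (sone, 1%N).
  rewrite /loc_der /loc_act /= sderiv_sconst mulr0n oppr0; congr pair.
  rewrite smul_s0 [smul szero _]smulC smul_s0.
  by apply: funext => al; rewrite /sadd /sscale /szero mul0r addr0.
apply: (@B_der_eq0 i); rewrite -w_der // d_one.
have [N w1N] := w_fin _ (one_valid 1%N).
rewrite (w_act szero _ N) //; last exact: convergent_szero.
by apply: funext => g; rewrite /B_act /sum_box big1 // => t _; rewrite /szero mul0r.
Qed.

End EhomKillsOne.

Lemma bfunction_root_free (R : realType) (b : {poly R[i]}) (k : int) m :
  (forall r, root b r -> - r - 1 < k%:~R) -> k <= m%:Z -> b.[- m.+1%:R] != 0.
Proof.
move=> root_lt le_km; apply/negP => /root_lt.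
by rewrite opprK -natr1 addrK pmulrn ltr_int ltNge le_km.
Qed.

Theorem proposition3p3 (R : realType) (n : nat) (f : series R n) :
  (2 <= n)%N -> convergent f -> isolated_sing f ->
  forall b : {poly R[i]}, is_bfunction f b ->
  forall k : int, (forall r : R[i], root b r -> - r - 1 < k%:~R) ->
  forall u v : loc R n -> bmod R n, is_Ehom f u -> is_Ehom f v ->
  phi f k u = phi f k v ->
  forall x : loc R n, loc_valid x -> u x = v x.
Proof.
move=> n_ge2 cf _ b [_ Dbf _] k root_lt u v Eu Ev uv_k.
have n_gt0 : (0 < n)%N by apply: leq_trans n_ge2.
have [K le_kK uv_K] : exists2 K : nat, k <= K%:Z & u (@sone R n, K) = v (@sone R n, K).
  case: k root_lt uv_k => [K|p] _ uv_k; first by exists K.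
  by exists 0%N; rewrite ?(Ehom_one_eq0 n_gt0 Eu) ?(Ehom_one_eq0 n_gt0 Ev).
apply: (agree_of_fpow Eu Ev); apply: (agree_fpow_all cf Eu Ev Dbf _ uv_K) => m le_Km.
by apply: (bfunction_root_free root_lt); apply: le_trans le_kK _; rewrite lez_nat.
Qed.
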